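(* Let $n\ge1$, $R>0$, $\gamma\in(0,1)$ and $\beta=\frac{2}{2-\gamma}$. Then there exists $U\in C^2((R,\infty))$, positive on $(R,\infty)$, such that $U$ and $U'$ extend continuously to $r=R$ and $$U''+\Big(\frac{n-1}{r}+\frac r2\Big)U'-\frac\beta2U=\gamma U^{\gamma-1}\ \text{ in }(R,\infty),\qquad U(R)=U'(R)=0.$$ *)

From Stdlib Require Import Reals.
From Coquelicot Require Import Coquelicot.
Open Scope R_scope.

Definition C2_on_open_right (a : R) (U : R -> R) : Prop :=
  forall x, a < x ->
    ex_derive U x /\ ex_derive (Derive U) x /\
    continuous (Derive (Derive U)) x.

From Stdlib Require Import Reals.
From Coquelicot Require Import Coquelicot.
Open Scope R_scope.
From Stdlib Require Import Lra Lia.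

(* Substituting r = Rad + t, the equation becomes (w U')' = w (bet/2 U + gam U^(gam-1)) on
   t > 0, where w = exp(Phi) with Phi' = (n-1)/(Rad+t) + (Rad+t)/2.  Near t = 0 the solution
   should behave like Uref = A t^bet, the exact solution of U'' = gam U^(gam-1).  It is
   obtained as a fixed point of
     TT U (s) = int_0^s (1/w(t)) int_0^t w (bet/2 U + gam U^(gam-1)),
   by Picard iteration in the weighted norm sup |U| / rho, rho(t) = t^(bet+1) e^(K t), on the
   functions that stay above ell ~ (A/2) t^bet and within 2 C0 rho of Uref.  On that set the
   singular term U^(gam-1) is Lipschitz with constant O(t^-2) near 0, which the two
   integrations in TT compensate exactly; the resulting contraction ratio is at most 1/2
   near 0 by the size of k = gam (1 - gam) (A/2)^(gam-2), and away from 0 thanks to the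
   factor e^(K t) with K large. *)

Lemma exp_le x y : x <= y -> exp x <= exp y.
Proof. intros [H | ->]; [left; apply exp_increasing, H | right; reflexivity]. Qed.

Lemma Rpower_gt0 x e : 0 < Rpower x e.
Proof. apply exp_pos. Qed.

Lemma Rle_Rpower_l_neg x y e : e <= 0 -> 0 < x -> x <= y -> Rpower y e <= Rpower x e.
Proof.
  intros He Hx Hxy. apply exp_le.
  assert (ln x <= ln y) by (apply ln_le; assumption). nra.
Qed.

Lemma Rle_Rpower_le1 t a b : 0 < t -> t <= 1 -> a <= b -> Rpower t b <= Rpower t a.
Proof.
  intros Ht Ht1 Hab. apply exp_le.
  assert (ln t <= 0) by (rewrite <- ln_1; apply ln_le; lra). nra.
Qed.

Lemma Rpower_plus1 x e : 0 < x -> Rpower x (e + 1) = Rpower x e * x.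
Proof. intros Hx. rewrite Rpower_plus, Rpower_1 by exact Hx. reflexivity. Qed.

Lemma is_derive_Rpower x e : 0 < x -> is_derive (fun t => Rpower t e) x (e * Rpower x (e - 1)).
Proof. intros Hx. apply is_derive_Reals, derivable_pt_lim_power, Hx. Qed.

Lemma continuous_Rpower x e : 0 < x -> continuous (fun t => Rpower t e) x.
Proof.
  intros Hx. apply (ex_derive_continuous (fun t => Rpower t e)).
  eexists. apply is_derive_Rpower, Hx.
Qed.

Lemma Rpower_lipschitz x y l e : e < 0 -> 0 < l -> l <= x -> l <= y ->
  Rabs (Rpower x e - Rpower y e) <= - e * Rpower l (e - 1) * Rabs (x - y).
Proof.
  intros He Hl Hx Hy.
  assert (Hmin : l <= Rmin y x) by (apply Rmin_glb; assumption).
  destruct (MVT_gen (fun t => Rpower t e) y x (fun t => e * Rpower t (e - 1)))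
    as [c [Hc ->]].
  - intros t Ht. apply is_derive_Rpower. lra.
  - intros t Ht. apply continuity_pt_filterlim, continuous_Rpower. lra.
  - assert (Rpower c (e - 1) <= Rpower l (e - 1)) by (apply Rle_Rpower_l_neg; lra).
    pose proof (Rpower_gt0 c (e - 1)).
    rewrite !Rabs_mult, (Rabs_left e), (Rabs_pos_eq (Rpower c (e - 1))) by lra.
    apply Rmult_le_compat_r; [apply Rabs_pos | nra].
Qed.

Lemma le_of_derive_nonneg (f df : R -> R) a b : a <= b ->
  (forall x, a <= x <= b -> continuous f x) ->
  (forall x, a < x < b -> is_derive f x (df x)) ->
  (forall x, a < x < b -> 0 <= df x) -> f a <= f b.
Proof.
  intros Hab Hc Hd Hpos.
  (* [MVT_gen] may return an endpoint, where [df] is not controlled. *)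
  set (dg x := if Rlt_dec a x then if Rlt_dec x b then df x else 0 else 0).
  assert (Hdg : forall x, 0 <= dg x).
  { intros x. unfold dg. destruct (Rlt_dec a x), (Rlt_dec x b); try lra. apply Hpos; lra. }
  destruct (MVT_gen f a b dg) as [c [_ Heq]].
  - rewrite Rmin_left, Rmax_right by lra. intros x Hx. unfold dg.
    destruct (Rlt_dec a x), (Rlt_dec x b); try lra. apply Hd, Hx.
  - rewrite Rmin_left, Rmax_right by lra. intros x Hx.
    apply continuity_pt_filterlim, Hc, Hx.
  - pose proof (Hdg c). nra.
Qed.

Lemma abs_increment_le_of_derive (f g df dg : R -> R) a b : a <= b ->
  (forall x, a <= x <= b -> continuous f x) ->
  (forall x, a <= x <= b -> continuous g x) ->
  (forall x, a < x < b -> is_derive f x (df x)) ->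
  (forall x, a < x < b -> is_derive g x (dg x)) ->
  (forall x, a < x < b -> Rabs (df x) <= dg x) ->
  Rabs (f b - f a) <= g b - g a.
Proof.
  intros Hab Hcf Hcg Hdf Hdg Hb.
  assert (Hminus : g a - f a <= g b - f b).
  { apply (le_of_derive_nonneg (fun x => g x - f x) (fun x => dg x - df x)); auto.
    - intros x Hx. apply (continuous_minus g f); auto.
    - intros x Hx. apply (is_derive_minus g f); auto.
    - intros x Hx. pose proof (Hb x Hx) as H. apply Rabs_le_between in H. lra. }
  assert (Hplus : g a + f a <= g b + f b).
  { apply (le_of_derive_nonneg (fun x => g x + f x) (fun x => dg x + df x)); auto.
    - intros x Hx. apply (continuous_plus g f); auto.
    - intros x Hx. apply (is_derive_plus g f); auto.
    - intros x Hx. pose proof (Hb x Hx) as H. apply Rabs_le_between in H. lra. }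
  apply Rabs_le_between. lra.
Qed.

Lemma continuous_of_abs_le (f g : R -> R) x :
  locally x (fun y => Rabs (f y - f x) <= g y) -> continuous g x -> g x = 0 ->
  continuous f x.
Proof.
  intros Hle Hg Hg0. apply filterlim_locally. intros eps.
  apply filterlim_locally with (eps := eps) in Hg.
  generalize (filter_and _ _ Hle Hg). apply filter_imp. intros y [H1 H2].
  change (Rabs (g y - g x) < eps) in H2. change (Rabs (f y - f x) < eps).
  rewrite Hg0, Rminus_0_r in H2. pose proof (Rle_abs (g y)). lra.
Qed.

Lemma continuous_of_uniform_approx (f : R -> R) x :
  (forall eps : posreal, exists g, continuous g x /\
     locally x (fun y => Rabs (f y - g y) < eps)) ->
  continuous f x.
Proof.
  intros Happrox. apply filterlim_locally. intros eps.
  assert (He3 : 0 < eps / 3) by (pose proof (cond_pos eps); lra).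
  destruct (Happrox (mkposreal _ He3)) as [g [Hg Hfg]]. simpl in Hfg.
  apply filterlim_locally with (eps := mkposreal _ He3) in Hg.
  generalize (filter_and _ _ Hg Hfg). apply filter_imp. intros y [H1 H2].
  change (Rabs (g y - g x) < eps / 3) in H1. change (Rabs (f y - f x) < eps).
  assert (Rabs (f x - g x) < eps / 3) by apply (locally_singleton _ _ Hfg).
  replace (f y - f x) with (((f y - g y) + (g y - g x)) + (g x - f x)) by ring.
  pose proof (Rabs_triang ((f y - g y) + (g y - g x)) (g x - f x)).
  pose proof (Rabs_triang (f y - g y) (g y - g x)).
  rewrite (Rabs_minus_sym (g x)) in *. lra.
Qed.

Lemma filterlim_at_right_of_continuous (f g : R -> R) x :
  continuous f x -> (forall t, x < t -> g t = f t) ->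
  filterlim g (at_right x) (locally (f x)).
Proof.
  intros Hc Heq. apply (filterlim_ext_loc f).
  - exists (mkposreal 1 Rlt_0_1). intros t _ Ht. symmetry. apply Heq, Ht.
  - apply (filterlim_filter_le_1 f (filter_le_within _) Hc).
Qed.

Lemma is_derive_RInt_continuous (f : R -> R) a x : (forall y, continuous f y) ->
  is_derive (fun y => RInt f a y) x (f x).
Proof.
  intros Hc. apply (is_derive_RInt f _ a x); [| apply Hc].
  apply filter_forall. intros y. apply (RInt_correct f a y).
  apply ex_RInt_continuous. intros; apply Hc.
Qed.

Lemma geometric_eventually_lt M q eps : 0 <= q < 1 -> 0 < eps ->
  exists N, forall j, (N <= j)%nat -> M * q ^ j < eps.
Proof.
  intros Hq He.
  assert (Hlim : is_lim_seq (fun j => M * q ^ j) 0).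
  { replace (Finite 0) with (Rbar_mult M 0) by (simpl; f_equal; ring).
    apply is_lim_seq_scal_l, is_lim_seq_geom. rewrite Rabs_pos_eq; lra. }
  apply is_lim_seq_spec in Hlim. destruct (Hlim (mkposreal _ He)) as [N HN].
  exists N. intros j Hj. specialize (HN j Hj). simpl in HN.
  rewrite Rminus_0_r in HN. pose proof (Rle_abs (M * q ^ j)). lra.
Qed.

Lemma le_0_of_le_geometric z M q : 0 <= q < 1 -> (forall j, z <= M * q ^ j) -> z <= 0.
Proof.
  intros Hq Hz. destruct (Rle_lt_dec z 0) as [|Hpos]; [assumption|].
  destruct (geometric_eventually_lt M q z Hq Hpos) as [N HN].
  specialize (HN N (le_n N)). specialize (Hz N). lra.
Qed.

Lemma is_lim_seq_abs_sub_le (u : nat -> R) (l c b : R) N : is_lim_seq u l ->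
  (forall m, (N <= m)%nat -> Rabs (u m - c) <= b) -> Rabs (l - c) <= b.
Proof.
  intros Hl Hb.
  assert (Hlim : is_lim_seq (fun m => Rabs (u m - c)) (Rabs (l - c))).
  { apply (is_lim_seq_abs _ (l - c)), is_lim_seq_minus'; [exact Hl | apply is_lim_seq_const]. }
  apply (is_lim_seq_le_loc (fun m => Rabs (u m - c)) (fun _ => b) (Rabs (l - c)) b);
    [| exact Hlim | apply is_lim_seq_const].
  exists N. exact Hb.
Qed.

(* [x ^ e] for [x > 0], extended by [0]: for [e > 0] this is continuous on all of [R],
   so it can be integrated from [0]. *)
Definition rpow (x e : R) : R := if Rlt_dec 0 x then Rpower x e else 0.

Lemma rpow_pos x e : 0 < x -> rpow x e = Rpower x e.
Proof. intros Hx. unfold rpow. destruct (Rlt_dec 0 x); [reflexivity | lra]. Qed.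

Lemma rpow_npos x e : x <= 0 -> rpow x e = 0.
Proof. intros Hx. unfold rpow. destruct (Rlt_dec 0 x); [lra | reflexivity]. Qed.

Lemma rpow_ge0 x e : 0 <= rpow x e.
Proof. unfold rpow. destruct (Rlt_dec 0 x); [left; apply Rpower_gt0 | lra]. Qed.

Lemma rpow_le x y e : 0 <= e -> x <= y -> rpow x e <= rpow y e.
Proof.
  intros He Hxy. destruct (Rlt_dec 0 x) as [Hx | Hx].
  - rewrite !rpow_pos by lra. apply Rle_Rpower_l; lra.
  - rewrite (rpow_npos x) by lra. apply rpow_ge0.
Qed.

Lemma is_derive_rpow x e : 0 < x -> is_derive (fun t => rpow t e) x (e * Rpower x (e - 1)).
Proof.
  intros Hx. apply (is_derive_ext_loc (fun t => Rpower t e)); [| apply is_derive_Rpower, Hx].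
  apply (filter_imp (fun t => 0 < t)); [| apply (open_gt 0 x Hx)].
  intros t Ht. symmetry. apply rpow_pos, Ht.
Qed.

Lemma continuous_rpow_0 e : 0 < e -> continuous (fun t => rpow t e) 0.
Proof.
  intros He. apply filterlim_locally. intros eps.
  exists (mkposreal _ (Rpower_gt0 eps (/ e))). intros y Hy.
  change (Rabs (y - 0) < Rpower eps (/ e)) in Hy. change (Rabs (rpow y e - rpow 0 e) < eps).
  rewrite (rpow_npos 0), Rminus_0_r by lra. rewrite Rminus_0_r in Hy.
  destruct (Rlt_dec 0 y) as [Hy0 | Hy0]; [| rewrite rpow_npos, Rabs_R0 by lra; apply cond_pos].
  rewrite rpow_pos, Rabs_pos_eq by (try left; auto using Rpower_gt0).
  rewrite Rabs_pos_eq in Hy by lra.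
  replace (pos eps) with (Rpower (Rpower eps (/ e)) e)
    by (rewrite Rpower_mult, Rinv_l, Rpower_1 by (try apply cond_pos; lra); reflexivity).
  unfold Rpower at 1 2. apply exp_increasing, Rmult_lt_compat_l, ln_increasing; assumption.
Qed.

Lemma continuous_0_of_Rpower_bound (f : R -> R) e M d : 0 < e -> 0 < d ->
  (forall x, x <= 0 -> f x = 0) ->
  (forall x, 0 < x < d -> Rabs (f x) <= M * Rpower x e) -> continuous f 0.
Proof.
  intros He Hd Hneg Hbound.
  apply (continuous_of_abs_le f (fun y => M * rpow y e)).
  - exists (mkposreal d Hd). intros y Hy. change (Rabs (y - 0) < d) in Hy.
    rewrite Rminus_0_r in Hy. rewrite (Hneg 0), Rminus_0_r by lra.
    destruct (Rlt_dec 0 y) as [Hy0 | Hy0].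
    + rewrite rpow_pos by exact Hy0. apply Hbound. pose proof (Rle_abs y). lra.
    + rewrite Hneg, rpow_npos, Rabs_R0 by lra. lra.
  - apply (continuous_scal_r M (fun y => rpow y e)), continuous_rpow_0, He.
  - rewrite rpow_npos by lra. ring.
Qed.

Lemma continuous_zero_extension (f g : R -> R) x :
  (forall t, t <= 0 -> f t = 0) -> (forall t, 0 < t -> f t = g t) ->
  (0 < x -> continuous g x) -> continuous f 0 -> continuous f x.
Proof.
  intros Hneg Hpos Hg H0. destruct (Rtotal_order x 0) as [Hx | [-> | Hx]]; [| exact H0 |].
  - apply (continuous_ext_loc _ (fun _ => 0)); [| apply continuous_const].
    apply (filter_imp (fun t => t < 0)); [| apply (open_lt 0 x Hx)].
    intros t Ht. symmetry. apply Hneg. lra.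
  - apply (continuous_ext_loc _ g); [| apply Hg, Hx].
    apply (filter_imp (fun t => 0 < t)); [| apply (open_gt 0 x Hx)].
    intros t Ht. symmetry. apply Hpos, Ht.
Qed.

Lemma continuous_rpow x e : 0 < e -> continuous (fun t => rpow t e) x.
Proof.
  intros He. apply (continuous_zero_extension _ (fun t => Rpower t e)).
  - intros t Ht. apply rpow_npos, Ht.
  - intros t Ht. apply rpow_pos, Ht.
  - apply continuous_Rpower.
  - apply continuous_rpow_0, He.
Qed.

Lemma continuous_Rpower_comp (f : R -> R) e x : continuous f x -> 0 < f x ->
  continuous (fun t => Rpower (f t) e) x.
Proof.
  intros Hf Hpos. apply (continuous_comp f (fun t => Rpower t e)); [exact Hf |].
  apply continuous_Rpower, Hpos.
Qed.

Ltac solve_continuous :=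
  match goal with
  | |- continuous (fun _ => ?c) _ => apply continuous_const
  | |- continuous (fun t => t) _ => apply continuous_id
  | |- continuous (fun t => @?f t + @?g t) _ => apply (continuous_plus f g); solve_continuous
  | |- continuous (fun t => @?f t - @?g t) _ => apply (continuous_minus f g); solve_continuous
  | |- continuous (fun t => @?f t * @?g t) _ => apply (continuous_mult f g); solve_continuous
  | |- continuous (fun t => @?f t / @?g t) _ =>
      apply (continuous_mult f (fun t => / g t)); cbv beta; solve_continuous
  | |- continuous (fun t => / @?f t) _ => apply (continuous_Rinv_comp f); [solve_continuous |]
  | |- continuous (fun t => exp (@?f t)) _ => apply (continuous_exp_comp f); solve_continuous
  | |- continuous (fun t => rpow t _) _ => apply continuous_rpow
  | |- continuous (fun t => Rpower (@?f t) _) _ =>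
      apply (continuous_Rpower_comp f); [solve_continuous |]
  | _ => idtac
  end.

(** * A fixed-point theorem in a weighted sup norm *)

Section WeightedFixedPoint.

Variables (P : (R -> R) -> Prop) (T : (R -> R) -> R -> R) (rho u0 : R -> R) (C q : R).
Hypotheses (rho_ge0 : forall x, 0 < x -> 0 <= rho x) (C_ge0 : 0 <= C) (q_ge0 : 0 <= q)
  (q_lt1 : q < 1).
Hypothesis P_u0 : P u0.
Hypothesis T_u0 : forall x, 0 < x -> Rabs (T u0 x - u0 x) <= C * rho x.
Hypothesis T_contract : forall U V d, P U -> P V -> 0 <= d ->
  (forall x, 0 < x -> Rabs (U x - V x) <= d * rho x) ->
  forall x, 0 < x -> Rabs (T U x - T V x) <= q * d * rho x.
Hypothesis T_stable : forall U, P U ->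
  (forall x, 0 < x -> Rabs (T U x - u0 x) <= C / (1 - q) * rho x) -> P (T U).
Hypothesis P_closed : forall U,
  (forall eps, 0 < eps -> exists V, P V /\
     forall x, 0 < x -> Rabs (U x - V x) <= eps * rho x) -> P U.

Let iterate j := Nat.iter j T u0.
Let D := C / (1 - q).

Lemma D_ge0 : 0 <= D.
Proof. apply Rdiv_le_0_compat; lra. Qed.

Lemma iterate_invariants j : P (iterate j) /\
  (forall x, 0 < x -> Rabs (iterate (S j) x - iterate j x) <= C * q ^ j * rho x) /\
  (forall x, 0 < x -> Rabs (iterate j x - u0 x) <= D * (1 - q ^ j) * rho x).
Proof.
  induction j as [| j [HP [Hstep Hdist]]].
  - split; [exact P_u0 | split]; intros x Hx; simpl.
    + rewrite Rmult_1_r. apply T_u0, Hx.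
    + rewrite Rminus_diag, Rabs_R0. right; ring.
  - pose proof (pow_le q j q_ge0) as Hqj. pose proof (pow_le q (S j) q_ge0) as HqSj.
    assert (HqSj1 : q ^ S j < 1) by (apply pow_lt_1_compat; [lra | lia]).
    assert (Hdist' : forall x, 0 < x -> Rabs (iterate (S j) x - u0 x) <= D * (1 - q ^ S j) * rho x).
    { intros x Hx.
      replace (iterate (S j) x - u0 x) with
        ((iterate (S j) x - iterate j x) + (iterate j x - u0 x)) by ring.
      eapply Rle_trans; [apply Rabs_triang |].
      assert (HC : C = D * (1 - q)) by (unfold D; field; lra).
      pose proof (Hstep x Hx). pose proof (Hdist x Hx). simpl pow. rewrite HC in *. nra. }
    assert (HP' : P (iterate (S j))).
    { apply T_stable; [exact HP |]. intros x Hx. change (C / (1 - q)) with D.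
      eapply Rle_trans; [apply Hdist', Hx |].
      pose proof D_ge0. pose proof (rho_ge0 x Hx). apply Rmult_le_compat_r; nra. }
    split; [exact HP' | split].
    + intros x Hx. change (Rabs (T (iterate (S j)) x - T (iterate j) x) <= C * q ^ S j * rho x).
      replace (C * q ^ S j) with (q * (C * q ^ j)) by (simpl; ring).
      apply T_contract; [exact HP' | exact HP | apply Rmult_le_pos; lra | exact Hstep | exact Hx].
    + exact Hdist'.
Qed.

Lemma iterate_cauchy j m x : 0 < x -> (j <= m)%nat ->
  Rabs (iterate m x - iterate j x) <= D * q ^ j * rho x.
Proof.
  intros Hx Hjm.
  assert (Hsum : forall i,
    Rabs (iterate (i + j) x - iterate j x) <= D * (q ^ j - q ^ (i + j)) * rho x).
  { induction i as [| i IH].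
    - simpl. rewrite Rminus_diag, Rabs_R0. right; ring.
    - change (S i + j)%nat with (S (i + j)).
      replace (iterate (S (i + j)) x - iterate j x) with
        ((iterate (S (i + j)) x - iterate (i + j) x) + (iterate (i + j) x - iterate j x)) by ring.
      eapply Rle_trans; [apply Rabs_triang |].
      destruct (iterate_invariants (i + j)) as [_ [Hstep _]].
      pose proof (Hstep x Hx).
      assert (HC : C = D * (1 - q)) by (unfold D; field; lra).
      simpl pow. rewrite HC in *. nra. }
  replace m with ((m - j) + j)%nat by lia.
  eapply Rle_trans; [apply Hsum |].
  pose proof D_ge0. pose proof (rho_ge0 x Hx). pose proof (pow_le q (m - j + j) q_ge0).
  apply Rmult_le_compat_r; nra.
Qed.

Let limit x := real (Lim_seq (fun j => iterate j x)).

Lemma is_lim_seq_iterate x : 0 < x -> is_lim_seq (fun j => iterate j x) (limit x).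
Proof.
  intros Hx.
  assert (Hcauchy : ex_lim_seq_cauchy (fun j => iterate j x)).
  { intros eps.
    assert (Heps : 0 < eps / 2) by (pose proof (cond_pos eps); lra).
    destruct (geometric_eventually_lt (D * rho x) q (eps / 2) (conj q_ge0 q_lt1) Heps)
      as [N HN].
    exists N. intros n m Hn Hm.
    replace (iterate n x - iterate m x) with
      ((iterate n x - iterate N x) - (iterate m x - iterate N x)) by ring.
    eapply Rle_lt_trans; [apply Rabs_triang | rewrite Rabs_Ropp].
    pose proof (iterate_cauchy N n x Hx Hn). pose proof (iterate_cauchy N m x Hx Hm).
    specialize (HN N (le_n N)). lra. }
  apply ex_lim_seq_cauchy_corr in Hcauchy.
  pose proof (Lim_seq_correct' _ Hcauchy) as Hlim.
  destruct Hcauchy as [l Hl]. unfold limit. rewrite (is_lim_seq_unique _ _ Hl) in *. exact Hlim.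
Qed.

Lemma limit_near j x : 0 < x -> Rabs (limit x - iterate j x) <= D * q ^ j * rho x.
Proof.
  intros Hx. apply (is_lim_seq_abs_sub_le (fun m => iterate m x) _ _ _ j).
  - apply is_lim_seq_iterate, Hx.
  - intros m Hm. apply iterate_cauchy; assumption.
Qed.

Theorem weighted_fixed_point : exists U, P U /\ forall x, 0 < x -> T U x = U x.
Proof.
  assert (HP : P limit).
  { apply P_closed. intros eps Heps.
    destruct (geometric_eventually_lt D q eps (conj q_ge0 q_lt1) Heps) as [N HN].
    exists (iterate N). split; [apply iterate_invariants |].
    intros x Hx. eapply Rle_trans; [apply limit_near, Hx |].
    pose proof (rho_ge0 x Hx). specialize (HN N (le_n N)).
    apply Rmult_le_compat_r; lra. }
  exists limit. split; [exact HP |]. intros x Hx.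
  assert (Hzero : Rabs (T limit x - limit x) <= 0).
  { apply (le_0_of_le_geometric _ (2 * D * rho x) q (conj q_ge0 q_lt1)). intros j.
    destruct (iterate_invariants j) as [HPj _].
    assert (H1 : Rabs (T limit x - T (iterate j) x) <= q * (D * q ^ j) * rho x).
    { apply T_contract; [exact HP | exact HPj | | | exact Hx].
      - pose proof D_ge0. pose proof (pow_le q j q_ge0). apply Rmult_le_pos; lra.
      - intros y Hy. apply limit_near, Hy. }
    pose proof (limit_near (S j) x Hx) as H2.
    change (iterate (S j) x) with (T (iterate j) x) in H2.
    replace (T limit x - limit x) with
      ((T limit x - T (iterate j) x) - (limit x - T (iterate j) x)) by ring.
    eapply Rle_trans; [apply Rabs_triang | rewrite Rabs_Ropp].
    assert (0 <= D * q ^ j * rho x).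
    { pose proof D_ge0. pose proof (rho_ge0 x Hx). pose proof (pow_le q j q_ge0).
      apply Rmult_le_pos; [apply Rmult_le_pos |]; assumption. }
    simpl pow in H2. nra. }
  pose proof (Rabs_pos (T limit x - limit x)).
  assert (Rabs (T limit x - limit x) = 0) as Habs by lra.
  apply Rabs_eq_0 in Habs. lra.
Qed.

End WeightedFixedPoint.

(** * The shifted problem *)

Section RadialProfile.

Variables (nu Rad gam : R).
Hypotheses (nu_ge0 : 0 <= nu) (Rad_gt0 : 0 < Rad) (gam_gt0 : 0 < gam) (gam_lt1 : gam < 1).

Definition bet := 2 / (2 - gam).

Lemma bet_gt1 : 1 < bet.
Proof. unfold bet. apply Rmult_lt_reg_r with (2 - gam); [lra |]. field_simplify; lra. Qed.

Lemma bet_gam1 : bet * (gam - 1) = bet - 2.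
Proof. unfold bet. field. lra. Qed.

Lemma bet_gam2 : bet * (gam - 2) = -2.
Proof. unfold bet. field. lra. Qed.

(* [A * t ^ bet] solves [U'' = gam * U ^ (gam - 1)]. *)
Definition A := Rpower (gam / (bet * (bet - 1))) (/ (2 - gam)).

Lemma A_gt0 : 0 < A.
Proof. apply Rpower_gt0. Qed.

Lemma Rpower_A_gam2 : Rpower A (gam - 2) = bet * (bet - 1) / gam.
Proof.
  pose proof bet_gt1. unfold A. rewrite Rpower_mult.
  replace (/ (2 - gam) * (gam - 2)) with (- (1)) by (field; lra).
  rewrite Rpower_Ropp, Rpower_1 by (apply Rdiv_lt_0_compat; nra). field. nra.
Qed.

Lemma gam_Rpower_A : gam * Rpower A (gam - 1) = A * bet * (bet - 1).
Proof.
  replace (gam - 1) with (1 + (gam - 2)) by ring.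
  rewrite Rpower_plus, Rpower_1, Rpower_A_gam2 by apply A_gt0. field. lra.
Qed.

Definition dPhi t := nu / (Rad + t) + (Rad + t) / 2.

(* The integrating factor: [(w U')' = w (U'' + dPhi U')]. *)
Definition w t := exp (nu * ln (Rad + t) + (Rad + t) ^ 2 / 4).

Definition dPhi_sup s := nu / Rad + (Rad + s) / 2.

Lemma w_gt0 t : 0 < w t.
Proof. apply exp_pos. Qed.

Lemma is_derive_w t : 0 <= t -> is_derive w t (w t * dPhi t).
Proof.
  intros Ht. unfold w, dPhi. auto_derive; [lra |].
  replace ((Rad + t) * ((Rad + t) * 1) * / 4) with ((Rad + t) ^ 2 / 4) by field.
  field. lra.
Qed.

Lemma continuous_w t : 0 <= t -> continuous w t.
Proof. intros Ht. apply (ex_derive_continuous w). eexists. apply is_derive_w, Ht. Qed.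

Lemma w_le x y : 0 <= x -> x <= y -> w x <= w y.
Proof.
  intros Hx Hxy. apply exp_le.
  assert (ln (Rad + x) <= ln (Rad + y)) by (apply ln_le; lra).
  assert ((Rad + x) ^ 2 <= (Rad + y) ^ 2) by (apply pow_incr; lra).
  nra.
Qed.

Lemma dPhi_gt0 t : 0 <= t -> 0 < dPhi t.
Proof.
  intros Ht. unfold dPhi. assert (0 <= nu / (Rad + t)) by (apply Rdiv_le_0_compat; lra). lra.
Qed.

Lemma dPhi_le_sup t s : 0 <= t -> t <= s -> dPhi t <= dPhi_sup s.
Proof.
  intros Ht Hts. unfold dPhi, dPhi_sup.
  assert (nu / (Rad + t) <= nu / Rad).
  { apply Rmult_le_compat_l; [lra |]. apply Rinv_le_contravar; lra. }
  lra.
Qed.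

Lemma dPhi_sup_gt0 s : 0 <= s -> 0 < dPhi_sup s.
Proof.
  intros Hs. unfold dPhi_sup. assert (0 <= nu / Rad) by (apply Rdiv_le_0_compat; lra). lra.
Qed.

Lemma w_sub_w0_le t s : 0 <= t -> t <= s -> 0 <= w t - w 0 <= t * w s * dPhi_sup s.
Proof.
  intros Ht Hts. split; [pose proof (w_le 0 t (Rle_refl 0) Ht); lra |].
  set (c := w s * dPhi_sup s).
  assert (Hmono : c * 0 - w 0 <= c * t - w t).
  { apply (le_of_derive_nonneg (fun x => c * x - w x) (fun x => c * 1 - w x * dPhi x));
      [exact Ht | | |].
    - intros x Hx. apply (continuous_minus (fun x => c * x) w); [solve_continuous |].
      apply continuous_w. lra.
    - intros x Hx. apply (is_derive_minus (fun x => c * x) w).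
      + apply (is_derive_scal (fun x => x)), (is_derive_id x).
      + apply is_derive_w. lra.
    - intros x Hx. unfold c.
      pose proof (w_le x s ltac:(lra) ltac:(lra)).
      pose proof (dPhi_le_sup x s ltac:(lra) ltac:(lra)).
      pose proof (dPhi_gt0 x ltac:(lra)). pose proof (w_gt0 x). nra. }
  unfold c in Hmono. lra.
Qed.

Definition k := gam * (1 - gam) * Rpower (A / 2) (gam - 2).

Lemma k_gt0 : 0 < k.
Proof. unfold k. pose proof (Rpower_gt0 (A / 2) (gam - 2)). apply Rmult_lt_0_compat; nra. Qed.

Lemma k_le : k <= (bet + 1) * bet / 2.
Proof.
  pose proof bet_gt1. pose proof A_gt0.
  assert (H2 : Rpower 2 (2 - gam) <= 4).
  { replace 4 with (Rpower 2 (INR 2)) by (rewrite Rpower_pow by lra; simpl; ring).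
    apply Rle_Rpower; simpl; lra. }
  assert (HA2 : Rpower (A / 2) (gam - 2) = bet * (bet - 1) / gam * Rpower 2 (2 - gam)).
  { rewrite <- Rpower_A_gam2.
    replace (2 - gam) with (- (gam - 2)) by ring. rewrite Rpower_Ropp.
    replace (Rpower A (gam - 2)) with (Rpower (A / 2) (gam - 2) * Rpower 2 (gam - 2))
      by (rewrite Rpower_mult_distr by lra; f_equal; field).
    field. apply Rgt_not_eq, Rpower_gt0. }
  assert (Hgam : 8 * (1 - gam) * (bet - 1) <= bet + 1).
  { unfold bet. apply Rmult_le_reg_r with (2 - gam); [lra |]. field_simplify; nra. }
  unfold k. rewrite HA2. pose proof (Rpower_gt0 2 (2 - gam)).
  apply Rle_trans with (4 * (1 - gam) * bet * (bet - 1)); [| nra].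
  replace (gam * (1 - gam) * (bet * (bet - 1) / gam * Rpower 2 (2 - gam)))
    with ((1 - gam) * bet * (bet - 1) * Rpower 2 (2 - gam)) by (field; lra).
  assert (0 <= (1 - gam) * bet * (bet - 1)) by (apply Rmult_le_pos; nra). nra.
Qed.

(* [C0] bounds [TT Uref - Uref] against [rho]; [s0] makes [2 C0 rho <= Uref / 2] on [(0, s0]],
   which keeps the iterates above [ell]; [K] makes [TT] a 1/2-contraction. *)
Definition C0 := 1 + (A * bet + gam * Rpower A (gam - 1)) * (nu / Rad + Rad / 2 + 1 / 2)
  + bet * A / 2.
Definition kap := 1 + bet / 2 + k.
Definition s0 := Rmin 1 (A / (4 * C0 * exp kap)).
Definition K := kap / s0.
Definition B := bet / 2 + k / s0 ^ 2.

Lemma C0_ge1 : 1 <= C0.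
Proof.
  unfold C0. pose proof A_gt0. pose proof bet_gt1. pose proof (Rpower_gt0 A (gam - 1)).
  assert (0 <= nu / Rad) by (apply Rdiv_le_0_compat; lra).
  assert (0 <= (A * bet + gam * Rpower A (gam - 1)) * (nu / Rad + Rad / 2 + 1 / 2)).
  { apply Rmult_le_pos; [| lra].
    pose proof (Rmult_gt_0_compat _ _ gam_gt0 (Rpower_gt0 A (gam - 1))). nra. }
  nra.
Qed.

Lemma kap_ge1 : 1 <= kap.
Proof. unfold kap. pose proof bet_gt1. pose proof k_gt0. lra. Qed.

Lemma s0_gt0 : 0 < s0.
Proof.
  unfold s0. apply Rmin_pos; [lra |]. pose proof A_gt0. pose proof C0_ge1. pose proof (exp_pos kap).
  apply Rdiv_lt_0_compat; nra.
Qed.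

Lemma s0_le1 : s0 <= 1.
Proof. apply Rmin_l. Qed.

Lemma s0_small : 4 * C0 * exp kap * s0 <= A.
Proof.
  pose proof C0_ge1. pose proof (exp_pos kap).
  assert (Hs : s0 <= A / (4 * C0 * exp kap)) by apply Rmin_r.
  apply Rmult_le_compat_l with (r := 4 * C0 * exp kap) in Hs; [| nra].
  replace (4 * C0 * exp kap * (A / (4 * C0 * exp kap))) with A in Hs by (field; nra). lra.
Qed.

Lemma K_s0 : K * s0 = kap.
Proof. unfold K. pose proof s0_gt0. field. lra. Qed.

Lemma K_ge1 : 1 <= K.
Proof. pose proof s0_gt0. pose proof s0_le1. pose proof kap_ge1. pose proof K_s0. nra. Qed.

Lemma B_ge0 : 0 <= B.
Proof.
  unfold B. pose proof bet_gt1. pose proof k_gt0. pose proof s0_gt0.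
  assert (0 <= k / s0 ^ 2) by (apply Rdiv_le_0_compat; nra). lra.
Qed.

Lemma B_le : B <= K ^ 2 / 2.
Proof.
  pose proof s0_gt0. pose proof s0_le1. pose proof k_gt0. pose proof bet_gt1.
  unfold B, K, kap. apply Rmult_le_reg_r with (s0 ^ 2); [nra |].
  field_simplify; try lra. assert (s0 ^ 2 <= 1) by nra. nra.
Qed.

Definition rho t := rpow t (bet + 1) * exp (K * t).
Definition drho t := ((bet + 1) * rpow t bet + K * rpow t (bet + 1)) * exp (K * t).
Definition d2rho t := ((bet + 1) * bet * rpow t (bet - 1) + 2 * K * (bet + 1) * rpow t bet
  + K ^ 2 * rpow t (bet + 1)) * exp (K * t).
Definition hh t := exp (K * t) * (B * rpow t (bet + 1) + k * rpow t (bet - 1)).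

Lemma is_derive_rpow_exp e c t : 0 < t ->
  is_derive (fun t => rpow t e * exp (c * t)) t ((e * rpow t (e - 1) + c * rpow t e) * exp (c * t)).
Proof.
  intros Ht. rewrite !rpow_pos by exact Ht.
  replace ((e * Rpower t (e - 1) + c * Rpower t e) * exp (c * t))
    with (e * Rpower t (e - 1) * exp (c * t) + rpow t e * (c * exp (c * t)))
    by (rewrite rpow_pos by exact Ht; ring).
  apply (is_derive_mult (fun t => rpow t e) (fun t => exp (c * t))).
  - apply is_derive_rpow, Ht.
  - auto_derive; [trivial | ring].
  - intros; apply Rmult_comm.
Qed.

Lemma is_derive_rho t : 0 < t -> is_derive rho t (drho t).
Proof.
  intros Ht.
  replace (drho t) with (((bet + 1) * rpow t (bet + 1 - 1) + K * rpow t (bet + 1)) * exp (K * t))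
    by (unfold drho; replace (bet + 1 - 1) with bet by ring; reflexivity).
  apply is_derive_rpow_exp, Ht.
Qed.

Lemma is_derive_drho t : 0 < t -> is_derive drho t (d2rho t).
Proof.
  intros Ht.
  apply (is_derive_ext (fun t => (bet + 1) * (rpow t bet * exp (K * t))
                                + K * (rpow t (bet + 1) * exp (K * t)))).
  { intros s. unfold drho. simpl. ring. }
  replace (d2rho t) with
    ((bet + 1) * ((bet * rpow t (bet - 1) + K * rpow t bet) * exp (K * t))
     + K * (((bet + 1) * rpow t (bet + 1 - 1) + K * rpow t (bet + 1)) * exp (K * t)))
    by (unfold d2rho; replace (bet + 1 - 1) with bet by ring; ring).
  apply (is_derive_plus (fun t => (bet + 1) * (rpow t bet * exp (K * t)))
                        (fun t => K * (rpow t (bet + 1) * exp (K * t))));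
    apply is_derive_scal, is_derive_rpow_exp, Ht.
Qed.

Lemma continuous_rho t : continuous rho t.
Proof. pose proof bet_gt1. unfold rho. solve_continuous. lra. Qed.

Lemma continuous_drho t : continuous drho t.
Proof. pose proof bet_gt1. unfold drho. solve_continuous; lra. Qed.

Lemma continuous_hh t : continuous hh t.
Proof. pose proof bet_gt1. unfold hh. solve_continuous; lra. Qed.

Lemma rho_0 : rho 0 = 0.
Proof. unfold rho. rewrite rpow_npos by lra. ring. Qed.

Lemma drho_0 : drho 0 = 0.
Proof. unfold drho. rewrite !rpow_npos by lra. ring. Qed.

Lemma rho_ge0 t : 0 <= rho t.
Proof. unfold rho. pose proof (rpow_ge0 t (bet + 1)). pose proof (exp_pos (K * t)). nra. Qed.

Lemma hh_ge0 t : 0 <= hh t.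
Proof.
  unfold hh. pose proof (rpow_ge0 t (bet + 1)). pose proof (rpow_ge0 t (bet - 1)).
  pose proof (exp_pos (K * t)). pose proof B_ge0. pose proof k_gt0.
  apply Rmult_le_pos; nra.
Qed.

Lemma rho_le x y : 0 <= x -> x <= y -> rho x <= rho y.
Proof.
  intros Hx Hxy. unfold rho. pose proof K_ge1. pose proof bet_gt1.
  assert (rpow x (bet + 1) <= rpow y (bet + 1)) by (apply rpow_le; lra).
  assert (exp (K * x) <= exp (K * y)) by (apply exp_le; nra).
  pose proof (rpow_ge0 x (bet + 1)). pose proof (exp_pos (K * x)). nra.
Qed.

(* The inequality that forces [K] to be large (through [B_le]); it makes [TT] a contraction. *)
Lemma RInt_hh_le t : 0 <= t -> RInt hh 0 t <= drho t / 2.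
Proof.
  intros Ht.
  assert (Hmono : drho 0 / 2 - RInt hh 0 0 <= drho t / 2 - RInt hh 0 t).
  { apply (le_of_derive_nonneg (fun x => drho x / 2 - RInt hh 0 x) (fun x => d2rho x / 2 - hh x));
      [exact Ht | | |].
    - intros x _. apply (continuous_minus (fun x => drho x / 2)).
      + apply (continuous_mult drho (fun _ => / 2));
          [apply continuous_drho | apply continuous_const].
      + apply (ex_derive_continuous (fun x => RInt hh 0 x)). eexists.
        apply is_derive_RInt_continuous, continuous_hh.
    - intros x Hx. apply (is_derive_minus (fun x => drho x / 2)).
      + apply (is_derive_ext (fun x => / 2 * drho x)); [intros; simpl; unfold Rdiv; ring |].
        replace (d2rho x / 2) with (/ 2 * d2rho x) by (unfold Rdiv; ring).
        apply is_derive_scal, is_derive_drho. lra.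
      + apply is_derive_RInt_continuous, continuous_hh.
    - intros x Hx. unfold d2rho, hh. rewrite !rpow_pos by lra.
      pose proof k_le. pose proof B_le. pose proof K_ge1. pose proof bet_gt1.
      pose proof (exp_pos (K * x)). pose proof (Rpower_gt0 x (bet - 1)).
      pose proof (Rpower_gt0 x bet). pose proof (Rpower_gt0 x (bet + 1)).
      replace (((bet + 1) * bet * Rpower x (bet - 1) + 2 * K * (bet + 1) * Rpower x bet
                + K ^ 2 * Rpower x (bet + 1)) * exp (K * x) / 2
               - exp (K * x) * (B * Rpower x (bet + 1) + k * Rpower x (bet - 1)))
        with (exp (K * x) * (((bet + 1) * bet / 2 - k) * Rpower x (bet - 1)
               + K * (bet + 1) * Rpower x bet + (K ^ 2 / 2 - B) * Rpower x (bet + 1)))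
        by field.
      apply Rmult_le_pos; [lra |].
      assert (0 <= ((bet + 1) * bet / 2 - k) * Rpower x (bet - 1)) by (apply Rmult_le_pos; lra).
      assert (0 <= (K ^ 2 / 2 - B) * Rpower x (bet + 1)) by (apply Rmult_le_pos; lra).
      assert (0 <= K * (bet + 1) * Rpower x bet)
        by (apply Rmult_le_pos; [apply Rmult_le_pos |]; lra).
      lra. }
  rewrite drho_0, RInt_point in Hmono. unfold zero in Hmono; simpl in Hmono. lra.
Qed.

Lemma rho_small x : 0 < x -> x <= s0 -> 2 * C0 * rho x <= A / 2 * Rpower x bet.
Proof.
  intros Hx Hxs. unfold rho. rewrite rpow_pos, Rpower_plus1 by exact Hx.
  pose proof s0_small. pose proof C0_ge1. pose proof K_ge1. pose proof K_s0.
  pose proof (Rpower_gt0 x bet).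
  assert (exp (K * x) <= exp kap) by (apply exp_le; nra).
  assert (x * exp (K * x) <= s0 * exp kap) by (apply Rmult_le_compat; try lra; left; apply exp_pos).
  assert (2 * C0 * (x * exp (K * x)) <= A / 2) by nra.
  replace (2 * C0 * (Rpower x bet * x * exp (K * x)))
    with (Rpower x bet * (2 * C0 * (x * exp (K * x)))) by ring.
  rewrite (Rmult_comm (A / 2)). apply Rmult_le_compat_l; lra.
Qed.

Definition Uref t := A * rpow t bet.
Definition ell t := A / 2 * rpow (Rmin t s0) bet.
Definition rhs u := bet / 2 * u + gam * Rpower u (gam - 1).

Lemma Uref_pos x : 0 < x -> Uref x = A * Rpower x bet.
Proof. intros Hx. unfold Uref. rewrite rpow_pos by exact Hx. reflexivity. Qed.

Lemma ell_gt0 x : 0 < x -> 0 < ell x.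
Proof.
  intros Hx. unfold ell. pose proof A_gt0. pose proof s0_gt0.
  assert (Hm : 0 < Rmin x s0) by (apply Rmin_pos; assumption).
  rewrite rpow_pos by exact Hm. pose proof (Rpower_gt0 (Rmin x s0) bet). nra.
Qed.

Lemma ell_le_Uref x : 0 < x -> ell x <= Uref x.
Proof.
  intros Hx. unfold ell, Uref. pose proof A_gt0. pose proof bet_gt1.
  assert (rpow (Rmin x s0) bet <= rpow x bet) by (apply rpow_le; [lra | apply Rmin_l]).
  pose proof (rpow_ge0 (Rmin x s0) bet). nra.
Qed.

Lemma Rpower_Uref x : 0 < x ->
  Rpower (A * Rpower x bet) (gam - 1) = Rpower A (gam - 1) * Rpower x (bet - 2).
Proof.
  intros Hx. rewrite <- Rpower_mult_distr by (apply A_gt0 || apply Rpower_gt0).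
  rewrite Rpower_mult, <- bet_gam1. reflexivity.
Qed.

Lemma gam_Rpower_ell x : 0 < x ->
  gam * (1 - gam) * Rpower (ell x) (gam - 2) = k / Rmin x s0 ^ 2.
Proof.
  intros Hx. pose proof A_gt0.
  assert (Hm : 0 < Rmin x s0) by (apply Rmin_pos; [exact Hx | apply s0_gt0]).
  unfold ell, k. rewrite rpow_pos by exact Hm.
  rewrite <- Rpower_mult_distr by (lra || apply Rpower_gt0).
  rewrite Rpower_mult, bet_gam2.
  replace (-2) with (- INR 2) by (simpl; ring).
  rewrite Rpower_Ropp, Rpower_pow by exact Hm. unfold Rdiv. ring.
Qed.

Lemma rhs_lipschitz t u v : 0 < t -> ell t <= u -> ell t <= v ->
  Rabs (rhs u - rhs v) <= (bet / 2 + k / Rmin t s0 ^ 2) * Rabs (u - v).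
Proof.
  intros Ht Hu Hv. pose proof (ell_gt0 t Ht). pose proof bet_gt1.
  pose proof (Rpower_lipschitz u v (ell t) (gam - 1) ltac:(lra) ltac:(lra) Hu Hv) as Hlip.
  replace (gam - 1 - 1) with (gam - 2) in Hlip by ring.
  unfold rhs.
  replace (bet / 2 * u + gam * Rpower u (gam - 1) - (bet / 2 * v + gam * Rpower v (gam - 1)))
    with (bet / 2 * (u - v) + gam * (Rpower u (gam - 1) - Rpower v (gam - 1))) by ring.
  eapply Rle_trans; [apply Rabs_triang |].
  rewrite !Rabs_mult, (Rabs_pos_eq (bet / 2)), (Rabs_pos_eq gam) by lra.
  rewrite Rmult_plus_distr_r, <- (gam_Rpower_ell t Ht). apply Rplus_le_compat_l.
  replace (gam * (1 - gam) * Rpower (ell t) (gam - 2) * Rabs (u - v))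
    with (gam * (- (gam - 1) * Rpower (ell t) (gam - 2) * Rabs (u - v))) by ring.
  apply Rmult_le_compat_l; [lra | exact Hlip].
Qed.

Lemma lipschitz_weight_le_hh t : 0 < t -> (bet / 2 + k / Rmin t s0 ^ 2) * rho t <= hh t.
Proof.
  intros Ht. unfold rho, hh. rewrite !rpow_pos by exact Ht.
  pose proof (exp_pos (K * t)). pose proof k_gt0. pose proof bet_gt1. pose proof s0_gt0.
  pose proof (Rpower_gt0 t (bet - 1)). pose proof (Rpower_gt0 t (bet + 1)).
  destruct (Rle_dec t s0) as [Hts | Hts].
  - rewrite Rmin_left by exact Hts.
    assert (Hsplit : Rpower t (bet + 1) = Rpower t (bet - 1) * t ^ 2).
    { replace (bet + 1) with (bet - 1 + 1 + 1) by ring. rewrite !Rpower_plus1 by exact Ht. ring. }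
    assert (bet / 2 <= B)
      by (unfold B; assert (0 <= k / s0 ^ 2) by (apply Rdiv_le_0_compat; nra); lra).
    replace ((bet / 2 + k / t ^ 2) * (Rpower t (bet + 1) * exp (K * t)))
      with (exp (K * t) * (bet / 2 * Rpower t (bet + 1) + k * Rpower t (bet - 1)))
      by (rewrite Hsplit; field; lra).
    apply Rmult_le_compat_l; nra.
  - rewrite Rmin_right by lra.
    replace ((bet / 2 + k / s0 ^ 2) * (Rpower t (bet + 1) * exp (K * t)))
      with (exp (K * t) * (B * Rpower t (bet + 1))) by (unfold B; ring).
    apply Rmult_le_compat_l; nra.
Qed.

(* [dTT U t] stands for [(int_0^t w * rhs U) / w t], the derivative of a solution of
   [(w U')' = w * rhs U]. The integrand is not Riemann integrable at [0]: its singular part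
   [w 0 * Uref''] is integrated by hand, to [w 0 * Uref'], leaving [Ereg U], which is
   continuous at [0] for admissible [U]. *)
Definition Ereg (U : R -> R) t := if Rlt_dec 0 t
  then w t * rhs (U t) - gam * Rpower A (gam - 1) * w 0 * Rpower t (bet - 2) else 0.
Definition dTT (U : R -> R) t := if Rlt_dec 0 t
  then (A * bet * w 0 * Rpower t (bet - 1) + RInt (Ereg U) 0 t) / w t else 0.
Definition TT (U : R -> R) s := RInt (dTT U) 0 s.

Record admissible (U : R -> R) : Prop := {
  adm_cont : forall x, 0 < x -> continuous U x;
  adm_lower : forall x, 0 < x -> ell x <= U x;
  adm_near : forall x, 0 < x -> Rabs (U x - Uref x) <= 2 * C0 * rho x }.

Lemma admissible_gt0 U x : admissible U -> 0 < x -> 0 < U x.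
Proof. intros HU Hx. pose proof (ell_gt0 x Hx). pose proof (adm_lower U HU x Hx). lra. Qed.

Lemma Ereg_pos U t : 0 < t ->
  Ereg U t = w t * rhs (U t) - gam * Rpower A (gam - 1) * w 0 * Rpower t (bet - 2).
Proof. intros Ht. unfold Ereg. destruct (Rlt_dec 0 t); [reflexivity | lra]. Qed.

Lemma Ereg_npos U t : t <= 0 -> Ereg U t = 0.
Proof. intros Ht. unfold Ereg. destruct (Rlt_dec 0 t); [lra | reflexivity]. Qed.

Lemma dTT_pos U t : 0 < t ->
  dTT U t = (A * bet * w 0 * Rpower t (bet - 1) + RInt (Ereg U) 0 t) / w t.
Proof. intros Ht. unfold dTT. destruct (Rlt_dec 0 t); [reflexivity | lra]. Qed.

Lemma dTT_npos U t : t <= 0 -> dTT U t = 0.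
Proof. intros Ht. unfold dTT. destruct (Rlt_dec 0 t); [lra | reflexivity]. Qed.

Lemma Ereg_lipschitz U V t d : 0 < t -> ell t <= U t -> ell t <= V t -> 0 <= d ->
  Rabs (U t - V t) <= d * rho t -> Rabs (Ereg U t - Ereg V t) <= w t * d * hh t.
Proof.
  intros Ht HU HV Hd HUV. rewrite !Ereg_pos by exact Ht.
  replace (w t * rhs (U t) - gam * Rpower A (gam - 1) * w 0 * Rpower t (bet - 2)
           - (w t * rhs (V t) - gam * Rpower A (gam - 1) * w 0 * Rpower t (bet - 2)))
    with (w t * (rhs (U t) - rhs (V t))) by ring.
  pose proof (w_gt0 t). pose proof k_gt0. pose proof bet_gt1.
  rewrite Rabs_mult, (Rabs_pos_eq (w t)), Rmult_assoc by lra.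
  apply Rmult_le_compat_l; [lra |].
  assert (Hm : 0 <= bet / 2 + k / Rmin t s0 ^ 2).
  { assert (0 < Rmin t s0) by (apply Rmin_pos; [exact Ht | apply s0_gt0]).
    assert (0 <= k / Rmin t s0 ^ 2) by (apply Rdiv_le_0_compat; nra). lra. }
  eapply Rle_trans; [apply (rhs_lipschitz t); assumption |].
  eapply Rle_trans; [apply Rmult_le_compat_l; [exact Hm | exact HUV] |].
  pose proof (lipschitz_weight_le_hh t Ht). nra.
Qed.

Lemma Ereg_Uref t : 0 < t -> Ereg Uref t
  = w t * (bet / 2 * (A * Rpower t bet))
    + gam * Rpower A (gam - 1) * Rpower t (bet - 2) * (w t - w 0).
Proof.
  intros Ht. rewrite Ereg_pos, Uref_pos by exact Ht.
  unfold rhs. rewrite Rpower_Uref by exact Ht. ring.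
Qed.

Lemma Ereg_Uref_le t x : 0 < t -> t <= x -> 0 <= Ereg Uref t
  <= w x * (bet / 2 * A * Rpower x bet
            + gam * Rpower A (gam - 1) * dPhi_sup x * Rpower x (bet - 1)).
Proof.
  intros Ht Htx. rewrite Ereg_Uref by exact Ht.
  pose proof (w_sub_w0_le t x ltac:(lra) Htx) as [Hw0 Hw1]. pose proof (w_le t x ltac:(lra) Htx).
  pose proof (w_gt0 t). pose proof A_gt0. pose proof bet_gt1.
  pose proof (dPhi_sup_gt0 x ltac:(lra)).
  set (a := gam * Rpower A (gam - 1)).
  assert (Ha : 0 < a) by (apply Rmult_lt_0_compat; [lra | apply Rpower_gt0]).
  pose proof (Rpower_gt0 t (bet - 2)). pose proof (Rpower_gt0 t bet).
  assert (Hp1 : Rpower t bet <= Rpower x bet) by (apply Rle_Rpower_l; lra).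
  assert (Hp2 : Rpower t (bet - 1) <= Rpower x (bet - 1)) by (apply Rle_Rpower_l; lra).
  assert (Ht2 : Rpower t (bet - 2) * t = Rpower t (bet - 1)).
  { rewrite <- Rpower_plus1 by exact Ht. f_equal. ring. }
  assert (B1 : 0 <= w t * (bet / 2 * (A * Rpower t bet)) <= w x * (bet / 2 * A * Rpower x bet)).
  { split; [apply Rmult_le_pos; [lra | apply Rmult_le_pos; nra] |].
    replace (w t * (bet / 2 * (A * Rpower t bet))) with (w t * (bet / 2 * A * Rpower t bet))
      by ring.
    apply Rmult_le_compat; [lra | apply Rmult_le_pos; nra | assumption |].
    apply Rmult_le_compat_l; [nra | exact Hp1]. }
  assert (B2 : 0 <= a * Rpower t (bet - 2) * (w t - w 0)
               <= w x * (a * dPhi_sup x * Rpower x (bet - 1))).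
  { split; [apply Rmult_le_pos; nra |].
    apply Rle_trans with (a * dPhi_sup x * w x * (Rpower t (bet - 2) * t)).
    - replace (a * dPhi_sup x * w x * (Rpower t (bet - 2) * t))
        with (a * Rpower t (bet - 2) * (t * w x * dPhi_sup x)) by ring.
      apply Rmult_le_compat_l; [nra | exact Hw1].
    - rewrite Ht2. pose proof (w_gt0 x).
      replace (w x * (a * dPhi_sup x * Rpower x (bet - 1)))
        with (a * dPhi_sup x * w x * Rpower x (bet - 1)) by ring.
      apply Rmult_le_compat_l; [| exact Hp2]. apply Rmult_le_pos; nra. }
  lra.
Qed.

Lemma hh_le_near0 t : 0 < t -> t <= s0 -> hh t <= exp kap * (B + k) * Rpower t (bet - 1).
Proof.
  intros Ht Hts. unfold hh. rewrite !rpow_pos by exact Ht.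
  pose proof K_s0. pose proof K_ge1. pose proof s0_le1. pose proof B_ge0. pose proof k_gt0.
  pose proof (Rpower_gt0 t (bet + 1)). pose proof (Rpower_gt0 t (bet - 1)).
  assert (exp (K * t) <= exp kap).
  { apply exp_le. rewrite <- K_s0. apply Rmult_le_compat_l; lra. }
  assert (Rpower t (bet + 1) <= Rpower t (bet - 1)) by (apply Rle_Rpower_le1; lra).
  assert (B * Rpower t (bet + 1) <= B * Rpower t (bet - 1)) by (apply Rmult_le_compat_l; lra).
  assert (0 <= B * Rpower t (bet + 1)) by (apply Rmult_le_pos; lra).
  pose proof (exp_pos (K * t)).
  rewrite Rmult_assoc. apply Rmult_le_compat; [lra | nra | lra | nra].
Qed.

Lemma Ereg_Uref_le_near0 t : 0 < t -> t <= 1 -> Rabs (Ereg Uref t)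
  <= w 1 * (bet / 2 * A + gam * Rpower A (gam - 1) * dPhi_sup 1) * Rpower t (bet - 1).
Proof.
  intros Ht Ht1. destruct (Ereg_Uref_le t t Ht (Rle_refl t)) as [H0 H1].
  rewrite Rabs_pos_eq by exact H0. eapply Rle_trans; [exact H1 |].
  pose proof (w_le t 1 ltac:(lra) Ht1). pose proof (w_gt0 t). pose proof A_gt0. pose proof bet_gt1.
  pose proof (dPhi_sup_gt0 t ltac:(lra)).
  assert (dPhi_sup t <= dPhi_sup 1) by (unfold dPhi_sup; lra).
  assert (Rpower t bet <= Rpower t (bet - 1)) by (apply Rle_Rpower_le1; lra).
  pose proof (Rpower_gt0 t bet). pose proof (Rpower_gt0 t (bet - 1)).
  set (a := gam * Rpower A (gam - 1)).
  assert (Ha : 0 < a) by (apply Rmult_lt_0_compat; [lra | apply Rpower_gt0]).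
  rewrite (Rmult_assoc (w 1)). apply Rmult_le_compat; [lra | | lra |].
  - apply Rplus_le_le_0_compat; apply Rmult_le_pos; nra.
  - rewrite Rmult_plus_distr_r. apply Rplus_le_compat.
    + apply Rmult_le_compat_l; nra.
    + apply Rmult_le_compat_r; [lra |]. apply Rmult_le_compat_l; lra.
Qed.

Lemma Ereg_le_near0 U : admissible U ->
  exists M, forall t, 0 < t -> t <= s0 -> Rabs (Ereg U t) <= M * Rpower t (bet - 1).
Proof.
  intros HU.
  exists (w 1 * (bet / 2 * A + gam * Rpower A (gam - 1) * dPhi_sup 1)
          + w 1 * (2 * C0) * (exp kap * (B + k))).
  intros t Ht Hts. pose proof s0_le1. pose proof C0_ge1.
  assert (Hdiff : Rabs (Ereg U t - Ereg Uref t)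
                  <= w 1 * (2 * C0) * (exp kap * (B + k) * Rpower t (bet - 1))).
  { eapply Rle_trans.
    { apply (Ereg_lipschitz U Uref t (2 * C0));
        [exact Ht | apply (adm_lower U HU t Ht) | apply ell_le_Uref, Ht
                           | lra | apply (adm_near U HU t Ht)]. }
    pose proof (w_le t 1 ltac:(lra) ltac:(lra)). pose proof (w_gt0 t). pose proof (hh_ge0 t).
    apply Rmult_le_compat; [nra | exact (hh_ge0 t) | nra | apply hh_le_near0; assumption]. }
  pose proof (Ereg_Uref_le_near0 t Ht ltac:(lra)).
  replace (Ereg U t) with ((Ereg U t - Ereg Uref t) + Ereg Uref t) by ring.
  eapply Rle_trans; [apply Rabs_triang |]. lra.
Qed.

Lemma continuous_Ereg U : admissible U -> forall t, continuous (Ereg U) t.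
Proof.
  intros HU t. pose proof bet_gt1.
  apply (continuous_zero_extension _ (fun y => w y * rhs (U y)
            - gam * Rpower A (gam - 1) * w 0 * Rpower y (bet - 2))).
  - apply Ereg_npos.
  - apply Ereg_pos.
  - intros Ht. unfold rhs. solve_continuous.
    + apply continuous_w. lra.
    + apply (adm_cont U HU t Ht).
    + apply (adm_cont U HU t Ht).
    + apply (admissible_gt0 U t HU Ht).
    + lra.
  - destruct (Ereg_le_near0 U HU) as [M HM].
    apply (continuous_0_of_Rpower_bound _ (bet - 1) M s0); [lra | apply s0_gt0 | apply Ereg_npos |].
    intros x Hx. apply HM; lra.
Qed.

Lemma dTT_le_near0 U : admissible U ->
  exists M, forall x, 0 < x -> x <= s0 -> Rabs (dTT U x) <= M * Rpower x (bet - 1).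
Proof.
  intros HU. destruct (Ereg_le_near0 U HU) as [M HM].
  pose proof s0_gt0. pose proof s0_le1. pose proof A_gt0. pose proof bet_gt1. pose proof (w_gt0 0).
  assert (HM0 : 0 <= M).
  { pose proof (HM s0 s0_gt0 (Rle_refl s0)). pose proof (Rpower_gt0 s0 (bet - 1)).
    pose proof (Rabs_pos (Ereg U s0)). nra. }
  exists ((A * bet * w 0 + M) / w 0). intros x Hx Hxs.
  pose proof (Rpower_gt0 x (bet - 1)) as Hpx.
  assert (HI : Rabs (RInt (Ereg U) 0 x) <= M * Rpower x (bet - 1)).
  { eapply Rle_trans.
    { apply abs_RInt_le_const with (M := M * Rpower x (bet - 1)); [lra | |].
      - apply (ex_RInt_continuous (Ereg U)). intros; apply continuous_Ereg, HU.
      - intros t [Ht0 Htx]. destruct (Rle_lt_dec t 0) as [Ht | Ht].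
        + rewrite Ereg_npos, Rabs_R0 by exact Ht. nra.
        + eapply Rle_trans; [apply HM; lra |]. apply Rmult_le_compat_l; [exact HM0 |].
          apply Rle_Rpower_l; lra. }
    rewrite Rminus_0_r. assert (0 <= M * Rpower x (bet - 1)) by nra. nra. }
  rewrite dTT_pos by exact Hx. pose proof (w_le 0 x (Rle_refl 0) ltac:(lra)). unfold Rdiv.
  rewrite Rabs_mult, Rabs_inv, (Rabs_pos_eq (w x)) by (pose proof (w_gt0 x); lra).
  assert (Hnum : Rabs (A * bet * w 0 * Rpower x (bet - 1) + RInt (Ereg U) 0 x)
                 <= (A * bet * w 0 + M) * Rpower x (bet - 1)).
  { eapply Rle_trans; [apply Rabs_triang |].
    rewrite Rabs_pos_eq by (apply Rmult_le_pos; [apply Rmult_le_pos; nra | lra]). nra. }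
  assert (/ w x <= / w 0) by (apply Rinv_le_contravar; lra).
  replace ((A * bet * w 0 + M) * / w 0 * Rpower x (bet - 1))
    with ((A * bet * w 0 + M) * Rpower x (bet - 1) * / w 0) by ring.
  apply Rmult_le_compat; [apply Rabs_pos | left; apply Rinv_0_lt_compat, w_gt0 | exact Hnum | lra].
Qed.

Lemma continuous_dTT U : admissible U -> forall t, continuous (dTT U) t.
Proof.
  intros HU t. pose proof bet_gt1.
  apply (continuous_zero_extension _ (fun y =>
           (A * bet * w 0 * Rpower y (bet - 1) + RInt (Ereg U) 0 y) * / w y)).
  - apply dTT_npos.
  - apply dTT_pos.
  - intros Ht. solve_continuous.
    + exact Ht.
    + apply (ex_derive_continuous (fun y => RInt (Ereg U) 0 y)). eexists.
      apply is_derive_RInt_continuous, continuous_Ereg, HU.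
    + apply continuous_w. lra.
    + apply Rgt_not_eq, w_gt0.
  - destruct (dTT_le_near0 U HU) as [M HM].
    apply (continuous_0_of_Rpower_bound _ (bet - 1) M s0); [lra | apply s0_gt0 | apply dTT_npos |].
    intros x Hx. apply HM; lra.
Qed.

Lemma is_derive_TT U : admissible U -> forall s, is_derive (TT U) s (dTT U s).
Proof. intros HU s. apply is_derive_RInt_continuous, continuous_dTT, HU. Qed.

Lemma continuous_TT U : admissible U -> forall s, continuous (TT U) s.
Proof. intros HU s. apply (ex_derive_continuous (TT U)). eexists. apply is_derive_TT, HU. Qed.

Lemma TT_0 U : TT U 0 = 0.
Proof. unfold TT. rewrite RInt_point. reflexivity. Qed.

Lemma dTT_ge0 U : admissible U -> forall t, 0 <= dTT U t.
Proof.
  intros HU t. destruct (Rle_lt_dec t 0) as [Ht | Ht]; [rewrite dTT_npos by exact Ht; lra |].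
  pose proof bet_gt1. pose proof (continuous_Ereg U HU) as HE.
  set (F x := A * bet * w 0 * rpow x (bet - 1) + RInt (Ereg U) 0 x).
  assert (HF : F 0 <= F t).
  { apply (le_of_derive_nonneg F (fun x => A * bet * w 0 * ((bet - 1) * Rpower x (bet - 1 - 1))
                                           + Ereg U x)); [lra | | |].
    - intros x _. apply (continuous_plus (fun x => A * bet * w 0 * rpow x (bet - 1))).
      + apply (continuous_scal_r (A * bet * w 0) (fun x => rpow x (bet - 1))), continuous_rpow. lra.
      + apply (ex_derive_continuous (fun x => RInt (Ereg U) 0 x)). eexists.
        apply is_derive_RInt_continuous, HE.
    - intros x Hx. apply (is_derive_plus (fun x => A * bet * w 0 * rpow x (bet - 1))).
      + apply is_derive_scal, is_derive_rpow. lra.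
      + apply is_derive_RInt_continuous, HE.
    - intros x Hx. rewrite Ereg_pos by lra. replace (bet - 1 - 1) with (bet - 2) by ring.
      replace (A * bet * w 0 * ((bet - 1) * Rpower x (bet - 2)))
        with (A * bet * (bet - 1) * w 0 * Rpower x (bet - 2)) by ring.
      rewrite <- gam_Rpower_A. unfold rhs.
      pose proof (admissible_gt0 U x HU ltac:(lra)). pose proof (w_gt0 x).
      pose proof (Rpower_gt0 (U x) (gam - 1)).
      assert (0 <= bet / 2 * U x + gam * Rpower (U x) (gam - 1)) by nra.
      replace (gam * Rpower A (gam - 1) * w 0 * Rpower x (bet - 2)
               + (w x * (bet / 2 * U x + gam * Rpower (U x) (gam - 1))
                  - gam * Rpower A (gam - 1) * w 0 * Rpower x (bet - 2)))
        with (w x * (bet / 2 * U x + gam * Rpower (U x) (gam - 1))) by ring.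
      nra. }
  unfold F in HF. rewrite rpow_npos, RInt_point, rpow_pos in HF by lra.
  unfold zero in HF; simpl in HF.
  rewrite dTT_pos by exact Ht. apply Rdiv_le_0_compat; [lra | apply w_gt0].
Qed.

Lemma TT_le U x y : admissible U -> 0 <= x -> x <= y -> TT U x <= TT U y.
Proof.
  intros HU Hx Hxy. apply (le_of_derive_nonneg (TT U) (dTT U)); [exact Hxy | | |].
  - intros; apply continuous_TT, HU.
  - intros; apply is_derive_TT, HU.
  - intros; apply dTT_ge0, HU.
Qed.

Lemma dTT_lipschitz U V d x : admissible U -> admissible V -> 0 <= d ->
  (forall t, 0 < t -> Rabs (U t - V t) <= d * rho t) -> 0 < x ->
  Rabs (dTT U x - dTT V x) <= / 2 * d * drho x.
Proof.
  intros HU HV Hd Hnear Hx. pose proof (w_gt0 x).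
  pose proof (continuous_Ereg U HU). pose proof (continuous_Ereg V HV).
  assert (Hex : forall f, (forall t, continuous f t) -> ex_RInt f 0 x)
    by (intros f Hf; apply (ex_RInt_continuous (V := R_CompleteNormedModule) f); intros; apply Hf).
  assert (Hsub : RInt (fun t => Ereg U t - Ereg V t) 0 x = RInt (Ereg U) 0 x - RInt (Ereg V) 0 x)
    by (apply (RInt_minus (Ereg U) (Ereg V)); auto).
  rewrite !dTT_pos by exact Hx.
  replace ((A * bet * w 0 * Rpower x (bet - 1) + RInt (Ereg U) 0 x) / w x
           - (A * bet * w 0 * Rpower x (bet - 1) + RInt (Ereg V) 0 x) / w x)
    with (RInt (fun t => Ereg U t - Ereg V t) 0 x / w x) by (rewrite Hsub; field; lra).
  assert (HI : Rabs (RInt (fun t => Ereg U t - Ereg V t) 0 x) <= w x * d * (drho x / 2)).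
  { eapply Rle_trans.
    { apply abs_RInt_le; [lra |]. apply Hex. intros; apply (continuous_minus (Ereg U)); auto. }
    eapply Rle_trans; [apply (RInt_le _ (fun t => w x * d * hh t)); [lra | | |] |].
    - apply Hex. intros t. apply (continuous_comp (fun t => Ereg U t - Ereg V t) Rabs);
        [apply (continuous_minus (Ereg U)); auto | apply continuous_Rabs].
    - apply Hex. intros t. apply (continuous_scal_r (w x * d) hh), continuous_hh.
    - intros t Ht. eapply Rle_trans.
      { apply Ereg_lipschitz; [lra | apply (adm_lower U HU) | apply (adm_lower V HV) | exact Hd
                              | apply Hnear]; lra. }
      apply Rmult_le_compat_r; [apply hh_ge0 |]. apply Rmult_le_compat_r; [exact Hd |].
      apply w_le; lra.
    - assert (Hscal : RInt (fun t => w x * d * hh t) 0 x = w x * d * RInt hh 0 x)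
        by (apply (RInt_scal hh 0 x (w x * d)), Hex, continuous_hh).
      rewrite Hscal.
      apply Rmult_le_compat_l; [apply Rmult_le_pos; lra |]. apply RInt_hh_le. lra. }
  unfold Rdiv. rewrite Rabs_mult, Rabs_inv, (Rabs_pos_eq (w x)) by lra.
  apply Rle_trans with (w x * d * (drho x / 2) * / w x).
  - apply Rmult_le_compat_r; [left; apply Rinv_0_lt_compat; lra | exact HI].
  - right. field. lra.
Qed.

Lemma TT_contract U V d : admissible U -> admissible V -> 0 <= d ->
  (forall x, 0 < x -> Rabs (U x - V x) <= d * rho x) ->
  forall s, 0 < s -> Rabs (TT U s - TT V s) <= / 2 * d * rho s.
Proof.
  intros HU HV Hd Hnear s Hs.
  pose proof (abs_increment_le_of_derive (fun x => TT U x - TT V x) (fun x => / 2 * d * rho x)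
                (fun x => dTT U x - dTT V x) (fun x => / 2 * d * drho x) 0 s) as H.
  cbv beta in H. rewrite !TT_0, rho_0, Rmult_0_r, !Rminus_0_r in H. apply H; [lra | | | | |].
  - intros x _. apply (continuous_minus (TT U)); apply continuous_TT; assumption.
  - intros x _. apply (continuous_scal_r (/ 2 * d) rho), continuous_rho.
  - intros x _. apply (is_derive_minus (TT U)); apply is_derive_TT; assumption.
  - intros x Hx. apply is_derive_scal, is_derive_rho. lra.
  - intros x Hx. apply dTT_lipschitz; auto. lra.
Qed.

Lemma admissible_Uref : admissible Uref.
Proof.
  pose proof bet_gt1. pose proof C0_ge1. split.
  - intros x Hx. unfold Uref. solve_continuous. lra.
  - apply ell_le_Uref.
  - intros x Hx. rewrite Rminus_diag, Rabs_R0. pose proof (rho_ge0 x). nra.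
Qed.

Lemma drho_ge x : 0 < x -> Rpower x bet * (1 + x) <= drho x.
Proof.
  intros Hx. unfold drho. rewrite !rpow_pos, Rpower_plus1 by exact Hx.
  pose proof bet_gt1. pose proof K_ge1. pose proof (Rpower_gt0 x bet).
  assert (1 <= exp (K * x))
    by (pose proof (exp_ineq1_le (K * x)); assert (0 <= K * x) by (apply Rmult_le_pos; lra); lra).
  assert (0 <= Rpower x bet * x) by (apply Rmult_le_pos; lra).
  assert (Rpower x bet * x <= K * (Rpower x bet * x)) by nra.
  assert (Rpower x bet * (1 + x) <= (bet + 1) * Rpower x bet + K * (Rpower x bet * x)) by nra.
  nra.
Qed.

Lemma abs_RInt_Ereg_Uref_le x : 0 < x -> Rabs (RInt (Ereg Uref) 0 x)
  <= x * (w x * (bet / 2 * A * Rpower x bet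
                 + gam * Rpower A (gam - 1) * dPhi_sup x * Rpower x (bet - 1))).
Proof.
  intros Hx. rewrite <- (Rminus_0_r x) at 2.
  apply abs_RInt_le_const; [lra | |].
  - apply (ex_RInt_continuous (Ereg Uref)). intros; apply continuous_Ereg, admissible_Uref.
  - intros t [Ht0 Htx]. destruct (Rle_lt_dec t 0) as [Ht | Ht].
    + rewrite Ereg_npos, Rabs_R0 by exact Ht.
      destruct (Ereg_Uref_le x x Hx (Rle_refl x)). lra.
    + destruct (Ereg_Uref_le t x Ht Htx). rewrite Rabs_pos_eq; assumption.
Qed.

Lemma dPhi_sup_le_C0 x : 0 <= x ->
  (A * bet + gam * Rpower A (gam - 1)) * dPhi_sup x + bet * A / 2 * x <= C0 * (1 + x).
Proof.
  intros Hx. unfold C0, dPhi_sup. pose proof A_gt0. pose proof bet_gt1.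
  set (X := A * bet + gam * Rpower A (gam - 1)).
  assert (HX : 0 <= X) by (pose proof (Rpower_gt0 A (gam - 1)); unfold X; nra).
  assert (0 <= nu / Rad) by (apply Rdiv_le_0_compat; lra).
  assert (0 <= X * (nu / Rad + Rad / 2 + 1 / 2)) by (apply Rmult_le_pos; lra).
  assert (0 <= X * (nu / Rad + Rad / 2) * x) by (apply Rmult_le_pos; [apply Rmult_le_pos |]; lra).
  assert (0 <= bet * A * x) by (apply Rmult_le_pos; nra).
  nra.
Qed.

Lemma dTT_Uref_sub_le x : 0 < x -> Rabs (dTT Uref x - A * bet * Rpower x (bet - 1)) <= C0 * drho x.
Proof.
  intros Hx. pose proof (w_gt0 x). pose proof (w_gt0 0). pose proof A_gt0. pose proof bet_gt1.
  set (J := RInt (Ereg Uref) 0 x).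
  set (a := gam * Rpower A (gam - 1)).
  assert (Ha : 0 < a) by (apply Rmult_lt_0_compat; [lra | apply Rpower_gt0]).
  pose proof (Rpower_gt0 x (bet - 1)). pose proof (Rpower_gt0 x bet).
  pose proof (dPhi_sup_gt0 x ltac:(lra)).
  assert (Hpx : Rpower x bet = Rpower x (bet - 1) * x).
  { rewrite <- Rpower_plus1 by exact Hx. f_equal. ring. }
  rewrite dTT_pos by exact Hx. fold J.
  (* The defect of [dTT Uref] comes from the weight, [Uref' * (w 0 - w x) / w x], and from
     the regular part of the source, [J / w x]. *)
  replace ((A * bet * w 0 * Rpower x (bet - 1) + J) / w x - A * bet * Rpower x (bet - 1))
    with (- (A * bet * Rpower x (bet - 1) * (w x - w 0) / w x) + J / w x) by (field; lra).
  assert (T1 : Rabs (- (A * bet * Rpower x (bet - 1) * (w x - w 0) / w x))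
               <= A * bet * dPhi_sup x * Rpower x bet).
  { destruct (w_sub_w0_le x x ltac:(lra) (Rle_refl x)) as [Hw0 Hw1].
    rewrite Rabs_Ropp, Rabs_pos_eq
      by (apply Rdiv_le_0_compat; [apply Rmult_le_pos; [apply Rmult_le_pos; nra |] |]; lra).
    apply Rmult_le_reg_r with (w x); [lra |]. unfold Rdiv.
    rewrite Rmult_assoc, Rinv_l, Rmult_1_r by lra. rewrite Hpx.
    replace (A * bet * dPhi_sup x * (Rpower x (bet - 1) * x) * w x)
      with (A * bet * Rpower x (bet - 1) * (x * w x * dPhi_sup x)) by ring.
    apply Rmult_le_compat_l; [apply Rmult_le_pos; [apply Rmult_le_pos |]; nra | exact Hw1]. }
  assert (T2 : Rabs (J / w x) <= Rpower x bet * (bet / 2 * A * x + a * dPhi_sup x)).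
  { unfold Rdiv. rewrite Rabs_mult, Rabs_inv, (Rabs_pos_eq (w x)) by lra.
    apply Rmult_le_reg_r with (w x); [lra |].
    rewrite Rmult_assoc, Rinv_l, Rmult_1_r by lra.
    eapply Rle_trans; [apply abs_RInt_Ereg_Uref_le, Hx |].
    right. fold a. rewrite Hpx. field. }
  eapply Rle_trans; [apply Rabs_triang |].
  apply Rle_trans with (C0 * (Rpower x bet * (1 + x)));
    [| apply Rmult_le_compat_l; [pose proof C0_ge1; lra | apply drho_ge, Hx]].
  pose proof (dPhi_sup_le_C0 x ltac:(lra)) as HC0. fold a in HC0.
  assert (E : A * bet * dPhi_sup x * Rpower x bet
              + Rpower x bet * (bet / 2 * A * x + a * dPhi_sup x)
              = Rpower x bet * ((A * bet + a) * dPhi_sup x + bet * A / 2 * x)) by field.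
  replace (C0 * (Rpower x bet * (1 + x))) with (Rpower x bet * (C0 * (1 + x))) by ring.
  assert (Rpower x bet * ((A * bet + a) * dPhi_sup x + bet * A / 2 * x)
          <= Rpower x bet * (C0 * (1 + x))) by (apply Rmult_le_compat_l; lra).
  lra.
Qed.

Lemma TT_Uref_near s : 0 < s -> Rabs (TT Uref s - Uref s) <= C0 * rho s.
Proof.
  intros Hs. pose proof bet_gt1.
  pose proof (abs_increment_le_of_derive (fun x => TT Uref x - Uref x) (fun x => C0 * rho x)
    (fun x => dTT Uref x - A * (bet * Rpower x (bet - 1))) (fun x => C0 * drho x) 0 s) as Hincr.
  cbv beta in Hincr.
  replace (Uref 0) with 0 in Hincr by (unfold Uref; rewrite rpow_npos by lra; ring).
  rewrite TT_0, rho_0, Rmult_0_r, !Rminus_0_r in Hincr.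
  apply Hincr; [lra | | | | |].
  - intros x _. apply (continuous_minus (TT Uref)); [apply continuous_TT, admissible_Uref |].
    unfold Uref. solve_continuous. lra.
  - intros x _. apply (continuous_scal_r C0 rho), continuous_rho.
  - intros x Hx. apply (is_derive_minus (TT Uref)); [apply is_derive_TT, admissible_Uref |].
    apply is_derive_scal, is_derive_rpow. lra.
  - intros x Hx. apply is_derive_scal, is_derive_rho. lra.
  - intros x Hx. rewrite <- Rmult_assoc. apply dTT_Uref_sub_le. lra.
Qed.

Lemma TT_admissible U : admissible U ->
  (forall x, 0 < x -> Rabs (TT U x - Uref x) <= 2 * C0 * rho x) -> admissible (TT U).
Proof.
  intros HU Hnear.
  assert (Hsmall : forall x, 0 < x -> x <= s0 -> ell x <= TT U x).
  { intros x Hx Hxs. pose proof (Hnear x Hx) as H. pose proof (rho_small x Hx Hxs).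
    apply Rabs_le_between in H. rewrite Uref_pos in H by exact Hx.
    unfold ell. rewrite Rmin_left, rpow_pos by assumption. lra. }
  split; [intros; apply continuous_TT, HU | | exact Hnear].
  intros x Hx. pose proof s0_gt0.
  destruct (Rle_dec x s0) as [Hxs | Hxs]; [apply Hsmall; assumption |].
  replace (ell x) with (ell s0) by (unfold ell; rewrite !Rmin_right by lra; reflexivity).
  apply Rle_trans with (TT U s0); [apply Hsmall; lra |]. apply TT_le; [exact HU | lra | lra].
Qed.

Lemma admissible_closed U :
  (forall eps, 0 < eps -> exists V, admissible V /\
     forall x, 0 < x -> Rabs (U x - V x) <= eps * rho x) ->
  admissible U.
Proof.
  intros Happrox.
  assert (Hpoint : forall x e, 0 < x -> 0 < e -> exists V, admissible V /\ Rabs (U x - V x) <= e).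
  { intros x e Hx He. pose proof (rho_ge0 x).
    destruct (Happrox (e / (rho x + 1))) as [V [HV HUV]]; [apply Rdiv_lt_0_compat; lra |].
    exists V. split; [exact HV |]. eapply Rle_trans; [apply HUV, Hx |].
    apply Rle_trans with (e / (rho x + 1) * (rho x + 1)); [| right; field; lra].
    apply Rmult_le_compat_l; [left; apply Rdiv_lt_0_compat |]; lra. }
  split.
  - intros x Hx. apply continuous_of_uniform_approx. intros eps.
    assert (Hrho : 0 <= rho (2 * x)) by apply rho_ge0.
    destruct (Happrox (eps / (rho (2 * x) + 1))) as [V [HV HUV]];
      [apply Rdiv_lt_0_compat; [apply cond_pos | lra] |].
    exists V. split; [apply (adm_cont V HV x Hx) |].
    exists (mkposreal x Hx). intros y Hy. change (Rabs (y - x) < x) in Hy.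
    apply Rabs_lt_between in Hy.
    eapply Rle_lt_trans; [apply HUV; lra |].
    assert (rho y <= rho (2 * x)) by (apply rho_le; lra).
    pose proof (rho_ge0 y). pose proof (cond_pos eps).
    apply Rle_lt_trans with (eps / (rho (2 * x) + 1) * rho (2 * x)).
    + apply Rmult_le_compat_l; [left; apply Rdiv_lt_0_compat; lra | assumption].
    + apply Rmult_lt_reg_r with (rho (2 * x) + 1); [lra |]. field_simplify; lra.
  - intros x Hx. apply le_epsilon. intros e He.
    destruct (Hpoint x e Hx He) as [V [HV HUV]].
    pose proof (adm_lower V HV x Hx). apply Rabs_le_between in HUV. lra.
  - intros x Hx. apply le_epsilon. intros e He.
    destruct (Hpoint x e Hx He) as [V [HV HUV]]. pose proof (adm_near V HV x Hx).
    replace (U x - Uref x) with ((U x - V x) + (V x - Uref x)) by ring.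
    pose proof (Rabs_triang (U x - V x) (V x - Uref x)). lra.
Qed.

Lemma TT_has_admissible_fixed_point : exists U, admissible U /\ forall x, 0 < x -> TT U x = U x.
Proof.
  assert (H2C0 : C0 / (1 - / 2) = 2 * C0) by field.
  apply (weighted_fixed_point admissible TT rho Uref C0 (/ 2)).
  - intros x _. apply rho_ge0.
  - pose proof C0_ge1. lra.
  - lra.
  - lra.
  - exact admissible_Uref.
  - exact TT_Uref_near.
  - intros U V d HU HV Hd Hnear. apply TT_contract; assumption.
  - rewrite H2C0. exact TT_admissible.
  - exact admissible_closed.
Qed.

Lemma is_derive_dTT U t : admissible U -> 0 < t ->
  is_derive (dTT U) t (rhs (U t) - dTT U t * dPhi t).
Proof.
  intros HU Ht. pose proof (w_gt0 t). pose proof bet_gt1.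
  set (N s := A * bet * w 0 * Rpower s (bet - 1) + RInt (Ereg U) 0 s).
  apply (is_derive_ext_loc (fun s => N s * / w s)).
  { apply (filter_imp (fun s => 0 < s)); [| apply (open_gt 0 t Ht)].
    intros s Hs. rewrite dTT_pos by exact Hs. reflexivity. }
  assert (HN : is_derive N t (w t * rhs (U t))).
  { replace (w t * rhs (U t))
      with (A * bet * w 0 * ((bet - 1) * Rpower t (bet - 1 - 1)) + Ereg U t).
    - apply (is_derive_plus (fun s => A * bet * w 0 * Rpower s (bet - 1))).
      + apply is_derive_scal, is_derive_Rpower, Ht.
      + apply is_derive_RInt_continuous, continuous_Ereg, HU.
    - rewrite Ereg_pos by exact Ht. replace (bet - 1 - 1) with (bet - 2) by ring.
      replace (A * bet * w 0 * ((bet - 1) * Rpower t (bet - 2)))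
        with (A * bet * (bet - 1) * w 0 * Rpower t (bet - 2)) by ring.
      rewrite <- gam_Rpower_A. ring. }
  replace (rhs (U t) - dTT U t * dPhi t)
    with (w t * rhs (U t) * / w t + N t * (- (w t * dPhi t) / w t ^ 2))
    by (rewrite dTT_pos by exact Ht; fold (N t); field; lra).
  apply (is_derive_mult N (fun s => / w s)); [exact HN | | intros; apply Rmult_comm].
  apply (is_derive_inv w); [apply is_derive_w; lra | lra].
Qed.

Theorem shifted_profile_exists : exists U,
  C2_on_open_right 0 U /\ (forall t, 0 < t -> 0 < U t) /\
  filterlim U (at_right 0) (locally 0) /\ filterlim (Derive U) (at_right 0) (locally 0) /\
  (forall t, 0 < t ->
     Derive (Derive U) t + dPhi t * Derive U t - bet / 2 * U t = gam * Rpower (U t) (gam - 1)).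
Proof.
  destruct TT_has_admissible_fixed_point as [U [HU Hfix]].
  set (U'' t := rhs (U t) - dTT U t * dPhi t).
  assert (HU' : forall t, 0 < t -> is_derive U t (dTT U t)).
  { intros t Ht. apply (is_derive_ext_loc (TT U)); [| apply is_derive_TT, HU].
    apply (filter_imp (fun s => 0 < s)); [apply Hfix | apply (open_gt 0 t Ht)]. }
  assert (HDU : forall t, 0 < t -> Derive U t = dTT U t)
    by (intros t Ht; apply is_derive_unique, HU', Ht).
  assert (HU''  : forall t, 0 < t -> is_derive (Derive U) t (U'' t)).
  { intros t Ht. apply (is_derive_ext_loc (dTT U)); [| apply is_derive_dTT; assumption].
    apply (filter_imp (fun s => 0 < s)); [| apply (open_gt 0 t Ht)].
    intros s Hs. symmetry. apply HDU, Hs. }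
  assert (HD2U : forall t, 0 < t -> Derive (Derive U) t = U'' t)
    by (intros t Ht; apply is_derive_unique, HU'', Ht).
  exists U. split; [| split; [| split; [| split]]].
  - intros t Ht. split; [eexists; apply HU', Ht | split; [eexists; apply HU'', Ht |]].
    apply (continuous_ext_loc _ U'').
    { apply (filter_imp (fun s => 0 < s)); [| apply (open_gt 0 t Ht)].
      intros s Hs. symmetry. apply HD2U, Hs. }
    unfold U'', rhs, dPhi. pose proof (admissible_gt0 U t HU Ht).
    solve_continuous; try lra.
    + apply (adm_cont U HU t Ht).
    + apply (adm_cont U HU t Ht).
    + apply continuous_dTT, HU.
  - intros t Ht. apply admissible_gt0; assumption.
  - pose proof (filterlim_at_right_of_continuous (TT U) U 0 (continuous_TT U HU 0)) as Hlim.
    rewrite TT_0 in Hlim. apply Hlim. intros t Ht. symmetry. apply Hfix, Ht.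
  - pose proof (filterlim_at_right_of_continuous (dTT U) (Derive U) 0 (continuous_dTT U HU 0))
      as Hlim.
    rewrite dTT_npos in Hlim by lra. apply Hlim, HDU.
  - intros t Ht. rewrite HD2U, HDU by exact Ht. unfold U'', rhs. ring.
Qed.

End RadialProfile.

(** * Back to the radial variable *)

Lemma Derive_shift (f : R -> R) c r : Derive (fun x => f (x - c)) r = Derive f (r - c).
Proof.
  unfold Derive. f_equal. apply Lim_ext. intros h.
  replace (r - c + h) with (r + h - c) by ring. reflexivity.
Qed.

Lemma is_derive_shift (f : R -> R) c x (l : R) : is_derive f (x - c) l ->
  is_derive (fun y => f (y - c)) x l.
Proof.
  intros Hf. replace l with (1 * l) by ring.
  apply (is_derive_comp f (fun y => y - c)); [exact Hf |].
  replace 1 with (1 - 0) by ring. apply (is_derive_minus (fun y => y) (fun _ => c)).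
  - apply (is_derive_id x).
  - apply (is_derive_const c x).
Qed.

Lemma C2_on_open_right_shift c (U : R -> R) :
  C2_on_open_right 0 U -> C2_on_open_right c (fun x => U (x - c)).
Proof.
  intros HU x Hx. destruct (HU (x - c) ltac:(lra)) as [[l1 H1] [[l2 H2] H3]].
  split; [| split].
  - exists l1. apply is_derive_shift, H1.
  - exists l2. apply (is_derive_ext (fun y => Derive U (y - c))).
    + intros y. symmetry. apply Derive_shift.
    + apply is_derive_shift, H2.
  - apply (continuous_ext (fun y => Derive (Derive U) (y - c))).
    + intros y. rewrite <- Derive_shift. apply Derive_ext. intros z. symmetry. apply Derive_shift.
    + apply (continuous_comp (fun y => y - c) (Derive (Derive U))); [| exact H3].
      apply (continuous_minus (fun y => y) (fun _ => c));
        [apply continuous_id | apply continuous_const].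
Qed.

Lemma filterlim_at_right_shift (f : R -> R) c l : filterlim f (at_right 0) (locally l) ->
  filterlim (fun x => f (x - c)) (at_right c) (locally l).
Proof.
  intros Hf. apply (filterlim_comp _ _ _ (fun x => x - c) f _ (at_right 0)); [| exact Hf].
  intros P [eps HP]. exists eps. intros y Hy Hyc. apply HP; [| lra].
  change (Rabs (y - c - 0) < eps). rewrite Rminus_0_r. exact Hy.
Qed.

Theorem lemma6p6 (n : nat) (Rad gamma : R)
  (hn : (1 <= n)%nat) (hR : 0 < Rad) (hg0 : 0 < gamma) (hg1 : gamma < 1) :
  let beta := 2 / (2 - gamma) in
  exists U : R -> R,
    C2_on_open_right Rad U /\
    (forall r, Rad < r -> 0 < U r) /\
    filterlim U (at_right Rad) (locally 0) /\
    filterlim (Derive U) (at_right Rad) (locally 0) /\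
    (forall r, Rad < r ->
       Derive (Derive U) r + ((INR n - 1) / r + r / 2) * Derive U r
         - beta / 2 * U r
       = gamma * Rpower (U r) (gamma - 1)).
Proof.
  intros beta.
  assert (Hnu : 0 <= INR n - 1) by (apply le_INR in hn; simpl in hn; lra).
  destruct (shifted_profile_exists (INR n - 1) Rad gamma Hnu hR hg0 hg1)
    as [U [HC2 [Hpos [HU0 [HDU0 Hode]]]]].
  exists (fun r => U (r - Rad)).
  assert (HD : forall r, Derive (fun x => U (x - Rad)) r = Derive U (r - Rad))
    by apply Derive_shift.
  split; [| split; [| split; [| split]]].
  - apply C2_on_open_right_shift, HC2.
  - intros r Hr. apply Hpos. lra.
  - apply filterlim_at_right_shift, HU0.
  - apply (filterlim_ext (fun r => Derive U (r - Rad))); [intros r; symmetry; apply HD |].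
    apply filterlim_at_right_shift, HDU0.
  - intros r Hr. rewrite HD, (Derive_ext _ (fun x => Derive U (x - Rad)) r HD), Derive_shift.
    rewrite <- (Hode (r - Rad)) by lra. unfold dPhi, bet, beta.
    replace (Rad + (r - Rad)) with r by ring. ring.
Qed.
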